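(* Let $V$ be a finite-dimensional super vector space over a field of characteristic $0$, let $W\subseteq V$ be a graded subspace, $D=W^0=\{X\in\mathfrak{gl}(V):X(w)=0\ \forall w\in W\}$ (so that $D^0=W$), and let $\pi:V\to\mathfrak{gl}(V)$ be an even, super skew-symmetric linear map; write $\pi(x,y)=\pi(x)(y)$. Let $L=\{X+\pi(x)+x: X\in D,\ x\in D^0\}\subseteq\mathfrak{gl}(V)\oplus V$. Then $L$ is a Dirac structure if and only if: (1) $D$ is a Lie sub-superalgebra of $\mathfrak{gl}(V)$; (2) $\pi(\pi(x,y))-[\pi(x),\pi(y)]\in D$ for all $x,y\in D^0$; (3) $\pi(x,y)\in D^0$ for all $x,y\in D^0$.
   Context: $\mathfrak{gl}(V)$: linear endomorphisms of $V$ with natural $\mathbb{Z}_2$-grading and supercommutator $[A,B]=AB-(-1)^{|A||B|}BA$. $\mathcal{E}=\mathfrak{gl}(V)\oplus V$ graded by $\mathcal{E}_\alpha=\mathfrak{gl}(V)_\alpha\oplus V_\alpha$, homogeneous elements $A+x$ with $|A|=|x|$. Bracket: $[\![A+x,B+y]\!]=[A,B]+\tfrac12(Ay-(-1)^{|x||y|}Bx)$; $V$-valued pairing: $\langle A+x,B+y\rangle=\tfrac12(Ay+(-1)^{|x||y|}Bx)$. $F^\perp=\{e:\langle e,f\rangle=0\ \forall f\in F\}$. For $D\subseteq\mathfrak{gl}(V)$, $D^0=\{x\in V: X(x)=0\ \forall X\in D\}$. Super skew-symmetric: $\pi(x)(y)=-(-1)^{|x||y|}\pi(y)(x)$ for homogeneous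 $x,y$. A Dirac structure is a graded subspace $L\subseteq\mathcal{E}$ with $L=L^\perp$ and $[\![L,L]\!]\subseteq L$. *)

From HB Require Import structures.
From mathcomp Require Import all_boot all_order all_algebra.
Set Implicit Arguments. Unset Strict Implicit. Unset Printing Implicit Defensive.
Import Order.TTheory GRing.Theory Num.Theory.
Local Open Scope ring_scope.

(* Model: the super vector space V = V_0 (+) V_1 with dim V_0 = m, dim V_1 = n,
   realised as column vectors 'cV[F]_(m+n); coordinate i is odd iff m <= i.
   gl(V) = 'M[F]_(m+n) acting on the left; parity of entry (i,j) is
   parity(i) xor parity(j).  Parity index: false = even (0), true = odd (1). *)

Section Super.
Variables (F : fieldType) (m n : nat).
Local Notation V := 'cV[F]_(m + n).
Local Notation M := 'M[F]_(m + n).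

Definition oddi (i : 'I_(m + n)) : bool := (m <= i)%N.

Definition vpar (b : bool) (x : V) : V :=
  \col_i (if oddi i == b then x i 0 else 0).
Definition mpar (b : bool) (A : M) : M :=
  \matrix_(i, j) (if (oddi i != oddi j) == b then A i j else 0).

Definition sgn (a b : bool) : F := (-1) ^+ (a && b).

Definition sbr (A B : M) : M :=
  \sum_(a : bool) \sum_(b : bool)
     (mpar a A *m mpar b B - sgn a b *: (mpar b B *m mpar a A)).

Definition epar (a : bool) (e : M * V) : M * V := (mpar a e.1, vpar a e.2).

Definition brE (e f : M * V) : M * V :=
  (sbr e.1 f.1,
   \sum_(a : bool) \sum_(b : bool)
     2^-1 *: (mpar a e.1 *m vpar b f.2 - sgn a b *: (mpar b f.1 *m vpar a e.2))).

Definition pairE (e f : M * V) : V :=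
  \sum_(a : bool) \sum_(b : bool)
     2^-1 *: (mpar a e.1 *m vpar b f.2 + sgn a b *: (mpar b f.1 *m vpar a e.2)).

Definition subspace (T : lmodType F) (S : T -> Prop) : Prop :=
  S 0 /\ forall (c : F) u v, S u -> S v -> S (c *: u + v).

Definition graded_subspaceV (S : V -> Prop) : Prop :=
  subspace S /\ forall b x, S x -> S (vpar b x).
Definition graded_subspaceM (S : M -> Prop) : Prop :=
  subspace S /\ forall b A, S A -> S (mpar b A).
Definition graded_subspaceE (S : M * V -> Prop) : Prop :=
  [/\ S (0, 0),
      (forall (c : F) u v, S u -> S v -> S (c *: u.1 + v.1, c *: u.2 + v.2))
    & forall b e, S e -> S (epar b e)].

Definition perpE (S : M * V -> Prop) (e : M * V) : Prop :=
  forall f, S f -> pairE e f = 0.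

Definition dirac (L : M * V -> Prop) : Prop :=
  [/\ graded_subspaceE L,
      (forall e, L e <-> perpE L e)
    & forall e f, L e -> L f -> L (brE e f)].

Definition annV (W : V -> Prop) (X : M) : Prop := forall w, W w -> X *m w = 0.
Definition annM (D : M -> Prop) (x : V) : Prop := forall X, D X -> X *m x = 0.

Definition lie_subsuperalg (D : M -> Prop) : Prop :=
  graded_subspaceM D /\ forall A B, D A -> D B -> D (sbr A B).

Definition even_map (pi : V -> M) : Prop :=
  forall b x, vpar b x = x -> mpar b (pi x) = pi x.
Definition super_skew (pi : V -> M) : Prop :=
  forall a b x y, vpar a x = x -> vpar b y = y ->
    pi x *m y = - (sgn a b *: (pi y *m x)).

Definition Lset (D : M -> Prop) (pi : V -> M) (e : M * V) : Prop :=
  exists X x, [/\ D X, annM D x & e = (X + pi x, x)].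

End Super.

From HB Require Import structures.
From mathcomp Require Import all_boot all_order all_algebra.
Import Order.TTheory GRing.Theory Num.Theory.
Set Implicit Arguments. Unset Strict Implicit. Unset Printing Implicit Defensive.
Local Open Scope ring_scope.

(* Both the pairing and the V-component of the bracket on E = gl(V) (+) V are
   (1/2)(e1 f2 +- T(f1, e2)), where T(B, x) = sum (-1)^(|B_b||x_a|) B_b x_a is
   the sign-twisted action.  Two facts about T drive everything:
   - T(pi y, x) = -pi(x)(y) for an even super skew-symmetric pi;
   - T(X, x) = 0 for X in D, x in D^0 (D graded), and conversely an x with
     T(X, x) = 0 for all X in D lies in D^0.
   From these, L is always a graded subspace with L = L^perp (using 2 != 0),
   so L is Dirac iff it is closed under the bracket.  Membership in L reads
   (A, z) in L <-> A - pi z in D and z in D^0, and the bracket of two elements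
   of L is ([X + pi x, Y + pi y], pi(x)(y)).  Testing closure on the elements
   (X, 0) and (pi x, x) gives conditions (1)-(3); conversely (3) makes the
   mixed brackets [X, pi y], [pi y, X] land in D, and (1), (2) handle the
   remaining terms. *)

Section Homogeneous.
Variables (F : fieldType) (m n : nat).
Local Notation V := 'cV[F]_(m + n).
Local Notation M := 'M[F]_(m + n).

Lemma vpar_sum (x : V) : \sum_b vpar b x = x.
Proof.
rewrite big_bool; apply/matrixP => i j; rewrite !mxE (ord1 j).
by case: (oddi i) => /=; rewrite ?addr0 ?add0r.
Qed.

Lemma mpar_sum (A : M) : \sum_b mpar b A = A.
Proof.
rewrite big_bool; apply/matrixP => i j; rewrite !mxE.
by case: (oddi i (m:=m) (n:=n)); case: (oddi j (m:=m) (n:=n));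
  rewrite /= ?addr0 ?add0r.
Qed.

Lemma vpar_is_linear b (c : F) (x y : V) :
  vpar b (c *: x + y) = c *: vpar b x + vpar b y.
Proof. by apply/matrixP => i j; rewrite !mxE; case: ifP; rewrite ?mulr0 ?addr0. Qed.

Lemma mpar_is_linear b (c : F) (A B : M) :
  mpar b (c *: A + B) = c *: mpar b A + mpar b B.
Proof. by apply/matrixP => i j; rewrite !mxE; case: ifP; rewrite ?mulr0 ?addr0. Qed.

HB.instance Definition _ b :=
  GRing.isLinear.Build F V V *:%R (vpar b) (vpar_is_linear b).
HB.instance Definition _ b :=
  GRing.isLinear.Build F M M *:%R (mpar b) (mpar_is_linear b).

Lemma vparK a b (x : V) : vpar a (vpar b x) = if a == b then vpar b x else 0.
Proof.
by case: a; case: b; apply/matrixP => i j; rewrite !mxE; case: (oddi i).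
Qed.

Lemma mparK a b (A : M) : mpar a (mpar b A) = if a == b then mpar b A else 0.
Proof.
case: a; case: b; apply/matrixP => i j; rewrite !mxE;
by case: (oddi i (m:=m) (n:=n)); case: (oddi j (m:=m) (n:=n)).
Qed.

Lemma mpar_mul_l a b (A : M) (x : V) :
  mpar a A *m vpar b x = vpar (a (+) b) (mpar a A *m x).
Proof.
apply/matrixP => i k; rewrite !mxE; case: ifP => Hi; last rewrite big1 //;
  [apply: eq_bigr|]; move=> j _; rewrite !mxE;
by move: Hi; case: (oddi i); case: (oddi j); case: a; case: b => //= _;
   rewrite ?mulr0 ?mul0r.
Qed.

Lemma mpar_mul_r a b (A : M) (x : V) :
  mpar a A *m vpar b x = vpar (a (+) b) (A *m vpar b x).
Proof.
apply/matrixP => i k; rewrite !mxE; case: ifP => Hi; last rewrite big1 //;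
  [apply: eq_bigr|]; move=> j _; rewrite !mxE;
by move: Hi; case: (oddi i); case: (oddi j); case: a; case: b => //= _;
   rewrite ?mulr0 ?mul0r.
Qed.

Lemma vpar_eq0 (x : V) : (forall b, vpar b x = 0) -> x = 0.
Proof. by move=> H; rewrite -[x]vpar_sum big_bool !H; apply: addr0. Qed.

Lemma sgnC a b : sgn F a b = sgn F b a.
Proof. by rewrite /sgn andbC. Qed.

Lemma sgnK a b : sgn F a b * sgn F a b = 1.
Proof. by case: a; case: b; rewrite /sgn /= ?mulr1 ?mulrNN ?mulr1. Qed.

Lemma sgn_neq0 a b : sgn F a b != 0.
Proof. by case: a; case: b; rewrite /sgn /= ?oppr_eq0 oner_eq0. Qed.

Lemma sbrDl (A A' B : M) : sbr (A + A') B = sbr A B + sbr A' B.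
Proof.
rewrite /sbr -big_split; apply: eq_bigr => a _; rewrite -big_split.
by apply: eq_bigr => b _; rewrite linearD mulmxDl mulmxDr scalerDr opprD addrACA.
Qed.

Lemma sbrDr (A B B' : M) : sbr A (B + B') = sbr A B + sbr A B'.
Proof.
rewrite /sbr -big_split; apply: eq_bigr => a _; rewrite -big_split.
by apply: eq_bigr => b _; rewrite linearD mulmxDl mulmxDr scalerDr opprD addrACA.
Qed.

Definition twact (B : M) (x : V) : V :=
  \sum_a \sum_b sgn F a b *: (mpar b B *m vpar a x).

Lemma twactDl (B B' : M) x : twact (B + B') x = twact B x + twact B' x.
Proof.
rewrite /twact -big_split; apply: eq_bigr => a _; rewrite -big_split.
by apply: eq_bigr => b _; rewrite linearD mulmxDl scalerDr.
Qed.

Lemma twact_homog c (B : M) x :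
  twact (mpar c B) x = \sum_a sgn F a c *: (mpar c B *m vpar a x).
Proof.
rewrite /twact; apply: eq_bigr => a _; rewrite big_bool.
by case: c; rewrite !mparK /= mul0mx scaler0 ?addr0 ?add0r.
Qed.

Lemma sum_homog_mul (A : M) (x : V) :
  \sum_a \sum_b (mpar a A *m vpar b x) = A *m x.
Proof.
under eq_bigr => a _ do rewrite -mulmx_sumr vpar_sum.
by rewrite -mulmx_suml mpar_sum.
Qed.

Lemma pairE_twact (e f : M * V) :
  pairE e f = 2^-1 *: (e.1 *m f.2 + twact f.1 e.2).
Proof.
rewrite /pairE /twact.
under eq_bigr => a _ do rewrite -scaler_sumr big_split.
by rewrite -scaler_sumr big_split sum_homog_mul.
Qed.

Lemma brE_twact (e f : M * V) :
  brE e f = (sbr e.1 f.1, 2^-1 *: (e.1 *m f.2 - twact f.1 e.2)).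
Proof.
rewrite /brE /twact; congr (_, _).
under eq_bigr => a _ do rewrite -scaler_sumr sumrB.
by rewrite -scaler_sumr sumrB sum_homog_mul.
Qed.

Lemma even_map_par (pi : {linear V -> M}) :
  even_map pi -> forall b x, mpar b (pi x) = pi (vpar b x).
Proof.
move=> pi_even b x.
have pi0 := pi_even false (vpar false x) (vparK _ _ _).
have pi1 := pi_even true (vpar true x) (vparK _ _ _).
rewrite -{1}[x]vpar_sum linear_sum linear_sum big_bool /= -pi0 -pi1.
by case: b; rewrite !mparK /= ?addr0 ?add0r.
Qed.

Lemma twact_skew (pi : {linear V -> M}) :
  even_map pi -> super_skew pi -> forall x y, twact (pi y) x = - (pi x *m y).
Proof.
move=> pi_even pi_skew x y; rewrite /twact.
have termE a b : sgn F a b *: (mpar b (pi y) *m vpar a x) =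
                 - (pi (vpar a x) *m vpar b y).
  rewrite even_map_par // (pi_skew b a (vpar b y) (vpar a x)) ?vparK ?eqxx //.
  by rewrite scalerN scalerA sgnC sgnK scale1r.
under eq_bigr => a _ do under eq_bigr => b _ do rewrite termE.
under eq_bigr => a _ do rewrite sumrN -mulmx_sumr vpar_sum.
by rewrite sumrN -mulmx_suml -linear_sum vpar_sum.
Qed.

Lemma annV_graded (W : V -> Prop) :
  graded_subspaceV W -> forall b X, annV W X -> annV W (mpar b X).
Proof.
move=> [_ W_graded] b X HX w Ww; rewrite -[w]vpar_sum mulmx_sumr big1 // => c _.
by rewrite mpar_mul_r HX ?linear0 //; apply: W_graded.
Qed.

Lemma annV_graded_subspace (W : V -> Prop) :
  graded_subspaceV W -> graded_subspaceM (annV W).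
Proof.
move=> HW; split; last exact: annV_graded.
split=> [w _|c X Y HX HY w Ww]; first by rewrite mul0mx.
by rewrite mulmxDl -scalemxAl HX // HY // scaler0 addr0.
Qed.

Section GradedSet.
Variables (D : M -> Prop).
Hypothesis D_graded : forall b X, D X -> D (mpar b X).

Lemma annM_graded b x : annM D x -> annM D (vpar b x).
Proof.
move=> Hx Z HZ; rewrite -[Z]mpar_sum mulmx_suml big1 // => c _.
by rewrite mpar_mul_l Hx ?linear0 //; apply: D_graded.
Qed.

Lemma annM_subspace c x y : annM D x -> annM D y -> annM D (c *: x + y).
Proof. by move=> Hx Hy Z HZ; rewrite mulmxDr -scalemxAr Hx // Hy // scaler0 addr0. Qed.

Lemma twact_ann Y x : D Y -> annM D x -> twact Y x = 0.
Proof.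
move=> HY Hx; rewrite /twact big1 // => a _; rewrite big1 // => b _.
by rewrite mpar_mul_l Hx ?linear0 ?scaler0 //; apply: D_graded.
Qed.

Lemma twact_ann_inv z : (forall Y, D Y -> twact Y z = 0) -> annM D z.
Proof.
move=> Tz Y HY; rewrite -[Y]mpar_sum mulmx_suml big1 // => c _.
have E := Tz _ (@D_graded c Y HY); rewrite twact_homog in E.
apply: vpar_eq0 => d; have := congr1 (vpar d) E.
rewrite linear_sum linear0 big_bool /= !linearZ /= !mpar_mul_l !vparK.
case: c {E}; case: d => /=; rewrite ?scaler0 ?addr0 ?add0r => /eqP;
by rewrite scaler_eq0 (negbTE (sgn_neq0 _ _)) => /eqP.
Qed.

End GradedSet.
End Homogeneous.

Section DiracL.
Variables (F : fieldType) (m n : nat).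
Variables (W : 'cV[F]_(m + n) -> Prop) (pi : {linear 'cV[F]_(m + n) -> 'M[F]_(m + n)}).
Hypotheses (char0 : [pchar F] =i pred0) (W_graded : graded_subspaceV W).
Hypotheses (pi_even : even_map pi) (pi_skew : super_skew pi).
Local Notation D := (annV W).
Local Notation L := (Lset D pi).

Let D_graded : forall b X, D X -> D (mpar b X) := annV_graded W_graded.

Lemma D0 : D 0.
Proof. by move=> w _; rewrite mul0mx. Qed.

Lemma W_annM w : W w -> annM D w.
Proof. by move=> Ww X; apply. Qed.

(* The only use of characteristic 0: the factor 1/2 can be cancelled. *)
Lemma half_double (v : 'cV[F]_(m + n)) : 2^-1 *: (v + v) = v.
Proof.
have two_neq0 : (2%:R : F) != 0 by rewrite (pcharf0P F).1.
by rewrite -mulr2n -scaler_nat scalerA mulVf // scale1r.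
Qed.

Lemma LsetE A z : L (A, z) <-> D (A - pi z) /\ annM D z.
Proof.
split=> [[X [x [HX Hx [-> ->]]]]|[HA Hz]]; first by rewrite addrK.
by exists (A - pi z), z; rewrite subrK.
Qed.

Lemma Lset_graded : graded_subspaceE L.
Proof.
have [[_ D_lin] _] := annV_graded_subspace W_graded.
split.
- by apply/LsetE; rewrite linear0 subr0; split; [exact: D0|move=> X _; rewrite mulmx0].
- move=> c [A z] [B y] /LsetE[HA Hz] /LsetE[HB Hy]; apply/LsetE.
  rewrite /= linearP /= opprD addrACA -scalerBr.
  by split; [exact: D_lin|exact: annM_subspace].
- move=> b [A z] /LsetE[HA Hz]; apply/LsetE; rewrite /= -even_map_par // -linearB.
  by split; [exact: D_graded|exact: annM_graded].
Qed.

Lemma pairE_Lset A z Y y : annM D z -> D Y -> annM D y ->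
  pairE (A, z) (Y + pi y, y) = 2^-1 *: (A *m y - pi z *m y).
Proof.
move=> Hz HY Hy; rewrite pairE_twact /= twactDl (twact_ann D_graded HY Hz).
by rewrite twact_skew // add0r.
Qed.

(* L is Lagrangian: L = L^perp.  For the inclusion L^perp <= L, pairing with
   (Y, 0), Y in D, puts z in D^0, and pairing with (pi w, w), w in W, puts
   A - pi z in W^0 = D. *)
Lemma Lset_perp e : L e <-> perpE L e.
Proof.
have scale_half_eq0 (v : 'cV[F]_(m + n)) : 2^-1 *: v = 0 -> v = 0.
  by move=> E; rewrite -[v]half_double scalerDr E addr0.
split=> [|Le].
- move=> [X [x [HX Hx ->]]] f [Y [y [HY Hy ->]]].
  by rewrite pairE_Lset // mulmxDl addrK (Hy X HX) scaler0.
- case: e Le => A z Le.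
  have Hz : annM D z.
    apply: (twact_ann_inv D_graded) => Y HY.
    have LY : L (Y, 0) by apply/LsetE; rewrite linear0 subr0;
      split=> // X _; rewrite mulmx0.
    by move: (Le _ LY); rewrite pairE_twact /= mulmx0 add0r => /scale_half_eq0.
  apply/LsetE; split=> // w Ww; have Hw := W_annM Ww.
  have Lw : L (pi w, w) by apply/LsetE; rewrite subrr; split; [exact: D0|].
  move: (Le _ Lw); rewrite -[pi w]add0r pairE_Lset //; last exact: D0.
  by move/scale_half_eq0; rewrite mulmxBl.
Qed.

Lemma brE_Lset X x Y y : D X -> annM D x -> D Y -> annM D y ->
  brE (X + pi x, x) (Y + pi y, y) = (sbr (X + pi x) (Y + pi y), pi x *m y).
Proof.
move=> HX Hx HY Hy; rewrite brE_twact /=; congr (_, _).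
rewrite twactDl (twact_ann D_graded HY Hx) twact_skew // add0r opprK.
by rewrite mulmxDl (Hy X HX) add0r half_double.
Qed.

(* Since L is always a graded Lagrangian subspace, it is Dirac iff involutive. *)
Lemma dirac_LsetE : dirac L <-> forall e f, L e -> L f -> L (brE e f).
Proof. by split=> [[]|L_br] //; split=> //; [exact: Lset_graded|exact: Lset_perp]. Qed.

(* Necessity: test involutivity on the elements (X, 0) and (pi x, x). *)
Lemma Lset_involutive_conditions : (forall e f, L e -> L f -> L (brE e f)) ->
  [/\ lie_subsuperalg D,
      (forall x y, annM D x -> annM D y -> D (pi (pi x *m y) - sbr (pi x) (pi y)))
    & (forall x y, annM D x -> annM D y -> annM D (pi x *m y))].
Proof.
move=> L_br.
have A0 : annM D 0 by move=> X _; rewrite mulmx0.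
have br_in_L X x Y y : D X -> annM D x -> D Y -> annM D y ->
    D (sbr (X + pi x) (Y + pi y) - pi (pi x *m y)) /\ annM D (pi x *m y).
  move=> HX Hx HY Hy; apply/LsetE; rewrite -brE_Lset //.
  by apply: L_br; apply/LsetE; rewrite addrK.
split.
- split=> [|X Y HX HY]; first exact: annV_graded_subspace.
  by have [] := br_in_L X 0 Y 0 HX A0 HY A0; rewrite mulmx0 !linear0 !addr0.
- move=> x y Hx Hy; have [Dbr _] := br_in_L 0 x 0 y D0 Hx D0 Hy.
  by move: Dbr; rewrite !add0r => Dbr w Ww; rewrite -opprB mulNmx Dbr ?oppr0.
- by move=> x y Hx Hy; have [] := br_in_L 0 x 0 y D0 Hx D0 Hy.
Qed.

Lemma sbr_mixed_ann :
  (forall x y, annM D x -> annM D y -> annM D (pi x *m y)) ->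
  forall X y, D X -> annM D y -> D (sbr X (pi y)) /\ D (sbr (pi y) X).
Proof.
move=> pi_D0 X y HX Hy.
have kill a b w : W w -> mpar a X *m (pi (vpar b y) *m w) = 0.
  move=> Ww; apply: (pi_D0 _ _ (annM_graded D_graded b Hy) (W_annM Ww)).
  exact: D_graded.
split=> w Ww; rewrite /sbr mulmx_suml big1 // => a _;
  rewrite mulmx_suml big1 // => b _; rewrite mulmxBl -!scalemxAl -!mulmxA;
  rewrite !even_map_par // !(D_graded _ HX Ww) !kill // mulmx0 ?scaler0;
  exact: subrr.
Qed.

(* Sufficiency: expanding [X + pi x, Y + pi y] - pi(pi x y), each piece lies in D. *)
Lemma conditions_Lset_involutive :
  lie_subsuperalg D ->
  (forall x y, annM D x -> annM D y -> D (pi (pi x *m y) - sbr (pi x) (pi y))) ->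
  (forall x y, annM D x -> annM D y -> annM D (pi x *m y)) ->
  forall e f, L e -> L f -> L (brE e f).
Proof.
move=> [_ D_sbr] D_curv pi_D0 _ _ [X [x [HX Hx ->]]] [Y [y [HY Hy ->]]].
rewrite brE_Lset //; apply/LsetE; split; last exact: pi_D0.
have [DXy _] := sbr_mixed_ann pi_D0 HX Hy.
have [_ DxY] := sbr_mixed_ann pi_D0 HY Hx.
move=> w Ww; have /eqP := D_curv x y Hx Hy w Ww; rewrite mulmxBl subr_eq0 => /eqP.
rewrite sbrDl !sbrDr mulmxBl !mulmxDl (D_sbr _ _ HX HY w Ww) (DXy w Ww).
by rewrite (DxY w Ww) !add0r => ->; rewrite subrr.
Qed.

End DiracL.

Theorem mainTheorem5 (F : fieldType) (m n : nat)
  (W : 'cV[F]_(m + n) -> Prop)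
  (pi : {linear 'cV[F]_(m + n) -> 'M[F]_(m + n)}) :
  [pchar F] =i pred0 ->
  graded_subspaceV W ->
  even_map pi ->
  super_skew pi ->
  let D := annV W in
  dirac (Lset D pi) <->
  [/\ lie_subsuperalg D,
      (forall x y, annM D x -> annM D y ->
         D (pi (pi x *m y) - sbr (pi x) (pi y)))
    & (forall x y, annM D x -> annM D y -> annM D (pi x *m y))].
Proof.
move=> char0 W_graded pi_even pi_skew D.
apply: iff_trans (dirac_LsetE char0 W_graded pi_even pi_skew) _; split.
- exact: (Lset_involutive_conditions char0 W_graded pi_even pi_skew).
- case; exact: (conditions_Lset_involutive char0 W_graded pi_even pi_skew).
Qed.
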